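(* Let $\alpha\in(0,1)$ and let $f_n,g_n:[0,+\infty)\to\mathbb{R}$ ($n\in\mathbb{N}$) be functions such that: $f_n$ and $g_n$ are H\''older continuous of order $\alpha$ for every $n$; $g_n\to0$ uniformly on $[0,+\infty)$; and there exists $L\in\mathbb{R}$ with $|f_n(t_1)-f_n(t_2)|\le L|t_1-t_2|$ for all $n\in\mathbb{N}$ and all $t_1,t_2\ge0$. Then $$\limsup_{n\to+\infty}\operatorname{Hold}_\alpha(f_n+g_n)\le\max\Big\{\limsup_{n\to+\infty}\operatorname{Hold}_\alpha(f_n),\ \limsup_{n\to+\infty}\operatorname{Hold}_\alpha(g_n)\Big\}.$$
   Context: For $c:[0,+\infty)\to\mathbb{R}$, $\operatorname{Hold}_\alpha(c):=\sup\{|c(t)-c(s)|/|t-s|^\alpha:\ t,s\ge0,\ t\neq s\}$. *)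

From Stdlib Require Import Reals Lra ClassicalEpsilon.
Open Scope R_scope.

Definition Hold_set (alpha : R) (c : R -> R) : R -> Prop :=
  fun r => exists t s, 0 <= t /\ 0 <= s /\ t <> s /\
    r = Rabs (c t - c s) / Rpower (Rabs (t - s)) alpha.

Definition Holder_continuous (alpha : R) (c : R -> R) : Prop :=
  bound (Hold_set alpha c).

(* Hold_alpha(c) = sup of the Hölder quotients (meaningful when c is
   Hölder continuous; the set is always nonempty). *)
Definition Hold (alpha : R) (c : R -> R) : R :=
  epsilon (inhabits 0) (fun h => is_lub (Hold_set alpha c) h).

Inductive Rbar : Type := Finite (x : R) | p_infty | m_infty.

Definition Rbar_le (x y : Rbar) : Prop :=
  match x, y with
  | m_infty, _ => True
  | _, p_infty => True
  | p_infty, _ => False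
  | _, m_infty => False
  | Finite a, Finite b => a <= b
  end.

Definition Rbar_max (x y : Rbar) : Rbar :=
  match x, y with
  | p_infty, _ | _, p_infty => p_infty
  | m_infty, z | z, m_infty => z
  | Finite a, Finite b => Finite (Rmax a b)
  end.

Definition is_limsup (u : nat -> R) (l : Rbar) : Prop :=
  match l with
  | Finite x =>
      (forall eps, 0 < eps -> exists N, forall n, (N <= n)%nat -> u n < x + eps) /\
      (forall eps, 0 < eps -> forall N, exists n, (N <= n)%nat /\ x - eps < u n)
  | p_infty => forall M N, exists n, (N <= n)%nat /\ M < u n
  | m_infty => forall M, exists N, forall n, (N <= n)%nat -> u n < M
  end.

(* Split the Hölder quotient of f_n + g_n at a scale delta.  Below delta the
   Lipschitz bound makes the quotient of f_n at most L delta^(1-alpha); above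
   delta the uniform smallness of g_n makes its quotient at most
   2 sup|g_n| / delta^alpha.  Hence Hold(f_n + g_n) exceeds
   max(Hold f_n, Hold g_n) by an error that is small for delta small and then
   n large, and taking limsups gives the claim. *)
From Stdlib Require Import Reals Lra Lia ClassicalEpsilon.
Open Scope R_scope.

Definition Rbar_lt (x y : Rbar) : Prop :=
  match x, y with
  | p_infty, _ | _, m_infty => False
  | m_infty, _ | _, p_infty => True
  | Finite a, Finite b => a < b
  end.

Definition eventually (P : nat -> Prop) : Prop := exists N, forall n, (N <= n)%nat -> P n.

Lemma eventually_and (P Q : nat -> Prop) :
  eventually P -> eventually Q -> eventually (fun n => P n /\ Q n).
Proof.
  intros [N1 H1] [N2 H2]; exists (N1 + N2)%nat; intros n Hn.
  split; [apply H1 | apply H2]; lia.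
Qed.

Lemma is_limsup_eventually_lt (u : nat -> R) (l : Rbar) (x : R) :
  is_limsup u l -> Rbar_lt l (Finite x) -> eventually (fun n => u n < x).
Proof.
  destruct l as [a| |]; simpl; [|tauto|intros H _; apply H].
  intros [Hup _] Hax; destruct (Hup (x - a)) as [N HN]; [lra|].
  exists N; intros n Hn; specialize (HN n Hn); lra.
Qed.

Lemma is_limsup_frequently_gt (u : nat -> R) (l : Rbar) (x : R) :
  is_limsup u l -> Rbar_lt (Finite x) l -> forall N, exists n, (N <= n)%nat /\ x < u n.
Proof.
  destruct l as [a| |]; simpl; [|intros H _; apply H|tauto].
  intros [_ Hlow] Hxa N; destruct (Hlow (a - x)) with (N := N) as [n Hn]; [lra|].
  exists n; replace x with (a - (a - x)) by ring; exact Hn.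
Qed.

Lemma Rbar_lt_or_le (l m : Rbar) : Rbar_le l m \/ exists x, Rbar_lt m (Finite x) /\ Rbar_lt (Finite x) l.
Proof.
  destruct l as [a| |], m as [b| |]; simpl; auto.
  - destruct (Rle_lt_dec a b); [now left|right; exists ((a + b) / 2); lra].
  - right; exists (a - 1); lra.
  - right; exists (b + 1); lra.
  - right; exists 0; auto.
Qed.

Lemma is_limsup_le (u : nat -> R) (l m : Rbar) :
  is_limsup u l -> (forall x, Rbar_lt m (Finite x) -> eventually (fun n => u n < x)) ->
  Rbar_le l m.
Proof.
  intros Hl Hm; destruct (Rbar_lt_or_le l m) as [|[x [Hmx Hxl]]]; [assumption|].
  destruct (Hm x Hmx) as [N HN].
  destruct (is_limsup_frequently_gt u l x Hl Hxl N) as [n [Hn Hxn]].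
  specialize (HN n Hn); lra.
Qed.

Lemma Rbar_lt_finite_dense (l : Rbar) (x : R) :
  Rbar_lt l (Finite x) -> exists y, y < x /\ Rbar_lt l (Finite y).
Proof.
  destruct l as [a| |]; simpl; [|tauto|].
  - exists ((a + x) / 2); lra.
  - exists (x - 1); lra.
Qed.

Lemma Rbar_max_lt (l m : Rbar) (x : R) :
  Rbar_lt (Rbar_max l m) (Finite x) -> Rbar_lt l (Finite x) /\ Rbar_lt m (Finite x).
Proof.
  destruct l as [a| |], m as [b| |]; simpl; try tauto; intros H.
  pose proof (Rmax_l a b); pose proof (Rmax_r a b); lra.
Qed.

Lemma is_limsup_le_max (u v w : nat -> R) (lu lv lw : Rbar) :
  is_limsup u lu -> is_limsup v lv -> is_limsup w lw ->
  (forall eta, 0 < eta -> eventually (fun n => w n <= Rmax (u n) (v n) + eta)) ->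
  Rbar_le lw (Rbar_max lu lv).
Proof.
  intros Hu Hv Hw Hwuv; apply (is_limsup_le w); [assumption|]; intros x Hx.
  destruct (Rbar_lt_finite_dense _ _ Hx) as [y [Hyx Hy]].
  destruct (Rbar_max_lt _ _ _ Hy) as [Huy Hvy].
  destruct (eventually_and _ _ (eventually_and _ _
    (is_limsup_eventually_lt u lu y Hu Huy) (is_limsup_eventually_lt v lv y Hv Hvy))
    (Hwuv (x - y) ltac:(lra))) as [N HN].
  exists N; intros n Hn; destruct (HN n Hn) as [[Hun Hvn] Hwn].
  assert (Rmax (u n) (v n) < y) by (apply Rmax_lub_lt; assumption); lra.
Qed.

Lemma Rpower_pos (x y : R) : 0 < Rpower x y.
Proof. apply exp_pos. Qed.

Section Holder.

Variable alpha : R.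

Definition Holder_quotient (c : R -> R) (t s : R) : R :=
  Rabs (c t - c s) / Rpower (Rabs (t - s)) alpha.

Lemma Hold_is_lub (c : R -> R) :
  Holder_continuous alpha c -> is_lub (Hold_set alpha c) (Hold alpha c).
Proof.
  intro Hc; unfold Hold; apply epsilon_spec.
  destruct (completeness (Hold_set alpha c) Hc) as [m Hm]; [|now exists m].
  exists (Holder_quotient c 1 0), 1, 0; repeat split; lra.
Qed.

Lemma Holder_quotient_le_Hold (c : R -> R) (t s : R) :
  Holder_continuous alpha c -> 0 <= t -> 0 <= s -> t <> s ->
  Holder_quotient c t s <= Hold alpha c.
Proof.
  intros Hc Ht Hs Hts; apply (Hold_is_lub c Hc); exists t, s; repeat split; auto.
Qed.

Lemma Hold_le (c : R -> R) (M : R) :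
  Holder_continuous alpha c ->
  (forall t s, 0 <= t -> 0 <= s -> t <> s -> Holder_quotient c t s <= M) ->
  Hold alpha c <= M.
Proof.
  intros Hc HM; apply (Hold_is_lub c Hc).
  intros r [t [s [Ht [Hs [Hts ->]]]]]; now apply HM.
Qed.

Lemma Holder_quotient_add (f g : R -> R) (t s : R) :
  Holder_quotient (fun x => f x + g x) t s <= Holder_quotient f t s + Holder_quotient g t s.
Proof.
  unfold Holder_quotient, Rdiv; rewrite <- Rmult_plus_distr_r.
  apply Rmult_le_compat_r; [left; apply Rinv_0_lt_compat, Rpower_pos|].
  replace (f t + g t - (f s + g s)) with ((f t - f s) + (g t - g s)) by ring.
  apply Rabs_triang.
Qed.

Lemma Holder_continuous_add (f g : R -> R) :
  Holder_continuous alpha f -> Holder_continuous alpha g ->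
  Holder_continuous alpha (fun x => f x + g x).
Proof.
  intros [Mf Hf] [Mg Hg]; exists (Mf + Mg).
  intros r [t [s [Ht [Hs [Hts ->]]]]].
  change (Holder_quotient (fun x => f x + g x) t s <= Mf + Mg).
  eapply Rle_trans; [apply Holder_quotient_add|].
  apply Rplus_le_compat; [apply Hf|apply Hg]; exists t, s; repeat split; auto.
Qed.

Lemma Holder_quotient_lipschitz (f : R -> R) (L t s : R) :
  t <> s -> Rabs (f t - f s) <= L * Rabs (t - s) ->
  Holder_quotient f t s <= L * Rpower (Rabs (t - s)) (1 - alpha).
Proof.
  intros Hts Hf; assert (Hd : 0 < Rabs (t - s)) by (apply Rabs_pos_lt; lra).
  unfold Holder_quotient; set (d := Rabs (t - s)) in *.
  set (p := Rpower d alpha); set (q := Rpower d (1 - alpha)).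
  assert (Hp : 0 < p) by apply Rpower_pos.
  assert (Hsplit : d = p * q).
  { unfold p, q; rewrite <- Rpower_plus; replace (alpha + (1 - alpha)) with 1 by ring.
    now rewrite Rpower_1. }
  apply Rle_trans with (L * d / p).
  - unfold Rdiv; apply Rmult_le_compat_r; [left; apply Rinv_0_lt_compat|]; assumption.
  - right; rewrite Hsplit at 1; field; lra.
Qed.

Lemma Holder_quotient_bounded (g : R -> R) (eps delta t s : R) :
  0 <= alpha -> 0 < delta -> delta <= Rabs (t - s) ->
  Rabs (g t) <= eps -> Rabs (g s) <= eps ->
  Holder_quotient g t s <= 2 * eps / Rpower delta alpha.
Proof.
  intros Ha Hdelta Hts Ht Hs.
  assert (Hpow : Rpower delta alpha <= Rpower (Rabs (t - s)) alpha)
    by (apply Rle_Rpower_l; lra).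
  assert (Hnum : Rabs (g t - g s) <= 2 * eps).
  { unfold Rminus; eapply Rle_trans; [apply Rabs_triang|]; rewrite Rabs_Ropp; lra. }
  unfold Holder_quotient, Rdiv; apply Rmult_le_compat; [apply Rabs_pos| |assumption|].
  - left; apply Rinv_0_lt_compat, Rpower_pos.
  - apply Rinv_le_contravar; [apply Rpower_pos|assumption].
Qed.

Lemma Hold_add_le_max (f g : R -> R) (L eps delta : R) :
  0 < alpha < 1 -> 0 <= L -> 0 < delta ->
  Holder_continuous alpha f -> Holder_continuous alpha g ->
  (forall t s, 0 <= t -> 0 <= s -> Rabs (f t - f s) <= L * Rabs (t - s)) ->
  (forall t, 0 <= t -> Rabs (g t) <= eps) ->
  Hold alpha (fun x => f x + g x) <=
    Rmax (Hold alpha f) (Hold alpha g) +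
    Rmax (L * Rpower delta (1 - alpha)) (2 * eps / Rpower delta alpha).
Proof.
  intros Ha HL Hdelta Hf Hg Hlip Hgeps.
  apply Hold_le; [now apply Holder_continuous_add|]; intros t s Ht Hs Hts.
  eapply Rle_trans; [apply Holder_quotient_add|].
  pose proof (Holder_quotient_le_Hold f t s Hf Ht Hs Hts).
  pose proof (Holder_quotient_le_Hold g t s Hg Ht Hs Hts).
  pose proof (Rmax_l (Hold alpha f) (Hold alpha g)).
  pose proof (Rmax_r (Hold alpha f) (Hold alpha g)).
  pose proof (Rmax_l (L * Rpower delta (1 - alpha)) (2 * eps / Rpower delta alpha)).
  pose proof (Rmax_r (L * Rpower delta (1 - alpha)) (2 * eps / Rpower delta alpha)).
  destruct (Rlt_or_le (Rabs (t - s)) delta) as [Hsmall|Hlarge].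
  - assert (Holder_quotient f t s <= L * Rpower delta (1 - alpha)); [|lra].
    eapply Rle_trans; [apply Holder_quotient_lipschitz, Hlip; assumption|].
    apply Rmult_le_compat_l; [assumption|].
    apply Rle_Rpower_l; [lra|]; split; [apply Rabs_pos_lt; lra|lra].
  - assert (Holder_quotient g t s <= 2 * eps / Rpower delta alpha); [|lra].
    apply Holder_quotient_bounded; auto; lra.
Qed.

End Holder.

Lemma exists_small_scale (L eta beta : R) :
  0 <= L -> 0 < eta -> 0 < beta -> exists delta, 0 < delta /\ L * Rpower delta beta <= eta.
Proof.
  intros HL Heta Hbeta; exists (Rpower (eta / (L + 1)) (/ beta)); split; [apply Rpower_pos|].
  rewrite Rpower_mult, Rinv_l, Rpower_1 by (try apply Rdiv_lt_0_compat; lra).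
  assert (0 < eta / (L + 1)) by (apply Rdiv_lt_0_compat; lra).
  apply Rle_trans with ((L + 1) * (eta / (L + 1))); [apply Rmult_le_compat_r; lra|].
  right; field; lra.
Qed.

Theorem mainTheorem4 (alpha : R) (f g : nat -> R -> R) :
  0 < alpha < 1 ->
  (forall n, Holder_continuous alpha (f n)) ->
  (forall n, Holder_continuous alpha (g n)) ->
  (forall eps, 0 < eps -> exists N, forall n t, (N <= n)%nat -> 0 <= t ->
      Rabs (g n t) < eps) ->
  (exists L : R, forall n t1 t2, 0 <= t1 -> 0 <= t2 ->
      Rabs (f n t1 - f n t2) <= L * Rabs (t1 - t2)) ->
  forall lfg lf lg : Rbar,
    is_limsup (fun n => Hold alpha (fun t => f n t + g n t)) lfg ->
    is_limsup (fun n => Hold alpha (f n)) lf ->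
    is_limsup (fun n => Hold alpha (g n)) lg ->
    Rbar_le lfg (Rbar_max lf lg).
Proof.
  intros Ha Hf Hg Hg_unif [L Hlip] lfg lf lg Hlfg Hlf Hlg.
  assert (HL : 0 <= L).
  { pose proof (Hlip 0%nat 1 0 ltac:(lra) ltac:(lra)) as H10.
    rewrite Rminus_0_r, Rabs_R1 in H10.
    pose proof (Rabs_pos (f 0%nat 1 - f 0%nat 0)); lra. }
  apply (is_limsup_le_max _ _ _ _ _ _ Hlf Hlg Hlfg); intros eta Heta.
  destruct (exists_small_scale L eta (1 - alpha)) as [delta [Hdelta HLdelta]]; try lra.
  assert (Hpow : 0 < Rpower delta alpha) by apply Rpower_pos.
  destruct (Hg_unif (eta * Rpower delta alpha / 2)) as [N HN]; [nra|].
  exists N; intros n Hn.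
  eapply Rle_trans.
  - apply (Hold_add_le_max alpha (f n) (g n) L (eta * Rpower delta alpha / 2) delta); auto.
    intros t Ht; left; auto.
  - apply Rplus_le_compat_l, Rmax_lub; [assumption|].
    right; field; lra.
Qed.
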